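(* Let $K>1$, let $1\le k\le n$, and let $X_1,\ldots,X_n$ be independent non-negative random variables with cdf's $F_1,\ldots,F_n$, each satisfying condition (C) with parameter $K$. Let $q>0$ satisfy $\sum_{i=1}^n F_i(q)\le k-1/2$. Then for every integer $\ell\ge5$, $$\mathbb P\Big\{\operatorname{k\text{-}min}_{1\le i\le n}X_i\le q/K^{\ell}\Big\}\le \frac{4}{2^{\ell/2}}.$$
   Context: For real numbers $a_1,\ldots,a_n$ and $1\le k\le n$, $\operatorname{k\text{-}min}_{i\le n}a_i$ denotes the $k$-th smallest element of the sequence (counted with multiplicity). Condition (C) with parameter $K>1$ for the cdf $F$ of a non-negative random variable: $\frac{F(Kt)}{1-F(Kt)}\ge \frac{2F(t)}{1-F(t)}$ for all $t>0$, with the conventions $1/0=\infty$, $1/\infty=0$. *)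

From Stdlib Require Import Reals Lra List.
Import ListNotations.
Open Scope R_scope.

Record prob_space := {
  omega :> Type;
  meas : (omega -> Prop) -> Prop;
  Pr : (omega -> Prop) -> R;
  meas_full : meas (fun _ => True);
  meas_compl : forall A, meas A -> meas (fun w => ~ A w);
  meas_cunion : forall A : nat -> omega -> Prop,
      (forall m, meas (A m)) -> meas (fun w => exists m, A m w);
  Pr_nonneg : forall A, meas A -> 0 <= Pr A;
  Pr_full : Pr (fun _ => True) = 1;
  Pr_cadd : forall A : nat -> omega -> Prop,
      (forall m, meas (A m)) ->
      (forall m1 m2 w, m1 <> m2 -> A m1 w -> A m2 w -> False) ->
      infinite_sum (fun m => Pr (A m)) (Pr (fun w => exists m, A m w))
}.

Definition random_variable (Om : prob_space) (X : Om -> R) : Prop :=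
  forall t, meas Om (fun w => X w <= t).

Definition cdf (Om : prob_space) (X : Om -> R) (t : R) : R :=
  Pr Om (fun w => X w <= t).

(* X_0, ..., X_{n-1} are (mutually) independent: the joint cdf of every
   subfamily factorises (events {X_i <= t_i} generate the sigma-algebras). *)
Definition independent (Om : prob_space) (n : nat) (X : nat -> Om -> R) : Prop :=
  forall (S : list nat) (t : nat -> R),
    NoDup S -> (forall i, In i S -> (i < n)%nat) ->
    Pr Om (fun w => forall i, In i S -> X i w <= t i)
    = fold_right Rmult 1 (map (fun i => Pr Om (fun w => X i w <= t i)) S).

(* Condition (C) with parameter K, with conventions 1/0 = oo, 1/oo = 0:
   F(Kt)/(1-F(Kt)) >= 2F(t)/(1-F(t)) for all t > 0. The LHS is oo iff
   F(Kt) = 1, the RHS is oo iff F(t) = 1. *)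
Definition condC (F : R -> R) (K : R) : Prop :=
  forall t, 0 < t ->
    F (K * t) = 1 \/
    (F t <> 1 /\ F (K * t) / (1 - F (K * t)) >= 2 * F t / (1 - F t)).

Definition count_idx (n : nat) (p : nat -> bool) : nat :=
  length (filter p (seq 0 n)).

(* v is the k-th smallest element (counted with multiplicity) of a_0..a_{n-1} *)
Definition is_kmin (a : nat -> R) (n k : nat) (v : R) : Prop :=
  (exists i, (i < n)%nat /\ a i = v) /\
  (count_idx n (fun i => if Rlt_dec (a i) v then true else false) < k)%nat /\
  (k <= count_idx n (fun i => if Rle_dec (a i) v then true else false))%nat.

Definition rsum (n : nat) (f : nat -> R) : R :=
  fold_right Rplus 0 (map f (seq 0 n)).

(* A Chernoff bound. Put t = q / K^l and lam = 2^l. The k-min is <= t iff at least k of the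
   independent events {X_i <= t} occur, so by Markov's inequality for lam^(number of occurrences)
   its probability is at most prod_i (1 - p_i + lam p_i) / lam^k, where p_i = F_i(t).
   Iterating (C) l times gives odds(F_i(q)) >= lam odds(p_i), and together with the convexity
   of exp this yields 1 - p_i + lam p_i <= lam^(F_i(q)). Hence the probability is at most
   lam^(sum_i F_i(q) - k) <= lam^(-1/2) = 2^(-l/2). *)

From Stdlib Require Import Reals Lra Lia List Permutation Classical FunctionalExtensionality PropExtensionality.
Open Scope R_scope.

Lemma infinite_sum_const_eq0 (e l : R) : infinite_sum (fun _ => e) l -> e = 0.
Proof.
  intros Hsum. destruct (Req_dec e 0) as [|He]; [assumption|exfalso].
  destruct (Hsum (Rabs e / 2)) as [N HN]; [apply Rabs_pos_lt in He; lra|].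
  pose proof (HN N (le_n N)) as HN0. pose proof (HN (S N) (le_S _ _ (le_n N))) as HN1.
  simpl sum_f_R0 in HN1. unfold Rdist in *.
  set (s := sum_f_R0 (fun _ => e) N) in *.
  split_Rabs; lra.
Qed.

Section ProbabilityBasics.

Variable Om : prob_space.

Lemma event_ext (A B : Om -> Prop) : (forall w, A w <-> B w) -> A = B.
Proof.
  intros H. apply functional_extensionality; intros w.
  apply propositional_extensionality, H.
Qed.

Lemma Pr_ext (A B : Om -> Prop) : (forall w, A w <-> B w) -> Pr Om A = Pr Om B.
Proof. intros H; rewrite (event_ext A B H); reflexivity. Qed.

Lemma meas_ext (A B : Om -> Prop) : (forall w, A w <-> B w) -> meas Om A -> meas Om B.
Proof. intros H; rewrite (event_ext A B H); trivial. Qed.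

Lemma meas_empty : meas Om (fun _ => False).
Proof. apply (meas_ext (fun _ => ~ True)); [tauto|]. apply meas_compl, meas_full. Qed.

Lemma Pr_empty : Pr Om (fun _ => False) = 0.
Proof.
  apply (infinite_sum_const_eq0 _ (Pr Om (fun w => exists _ : nat, False))).
  apply (Pr_cadd Om (fun _ _ => False)); [intros; apply meas_empty | tauto].
Qed.

Definition pair_family (A B : Om -> Prop) (m : nat) : Om -> Prop :=
  match m with 0%nat => A | 1%nat => B | _ => fun _ => False end.

Lemma pair_family_union (A B : Om -> Prop) w :
  (exists m, pair_family A B m w) <-> A w \/ B w.
Proof.
  split; [intros [[|[|m]] Hm]; simpl in Hm; tauto|].
  intros [H|H]; [exists 0%nat | exists 1%nat]; exact H.
Qed.

Lemma meas_pair_family (A B : Om -> Prop) :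
  meas Om A -> meas Om B -> forall m, meas Om (pair_family A B m).
Proof. intros HA HB [|[|m]]; simpl; auto using meas_empty. Qed.

Lemma meas_or (A B : Om -> Prop) :
  meas Om A -> meas Om B -> meas Om (fun w => A w \/ B w).
Proof.
  intros HA HB. apply (meas_ext _ _ (pair_family_union A B)).
  apply meas_cunion, meas_pair_family; assumption.
Qed.

Lemma meas_and (A B : Om -> Prop) :
  meas Om A -> meas Om B -> meas Om (fun w => A w /\ B w).
Proof.
  intros HA HB. apply (meas_ext (fun w => ~ (~ A w \/ ~ B w))); [intros w; tauto|].
  apply meas_compl, meas_or; apply meas_compl; assumption.
Qed.

Lemma Pr_or_disjoint (A B : Om -> Prop) :
  meas Om A -> meas Om B -> (forall w, A w -> B w -> False) ->
  Pr Om (fun w => A w \/ B w) = Pr Om A + Pr Om B.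
Proof.
  intros HA HB Hdisj.
  assert (Hsum := Pr_cadd Om (pair_family A B) (meas_pair_family A B HA HB)).
  rewrite (Pr_ext _ _ (pair_family_union A B)) in Hsum.
  apply (uniqueness_sum (fun m => Pr Om (pair_family A B m))).
  - apply Hsum. intros [|[|m1]] [|[|m2]] w Hne; simpl; try tauto; eauto; lia.
  - intros eps Heps; exists 1%nat; intros [|N] HN; [lia|].
    replace (sum_f_R0 _ (S N)) with (Pr Om A + Pr Om B).
    + unfold Rdist; rewrite Rminus_diag, Rabs_R0; assumption.
    + clear HN; induction N; [reflexivity|].
      rewrite tech5, <- IHN; simpl; rewrite Pr_empty; ring.
Qed.

Lemma Pr_and_add_and_not (A B : Om -> Prop) :
  meas Om A -> meas Om B ->
  Pr Om (fun w => A w /\ B w) + Pr Om (fun w => A w /\ ~ B w) = Pr Om A.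
Proof.
  intros HA HB. rewrite <- Pr_or_disjoint.
  - apply Pr_ext; intros w; tauto.
  - apply meas_and; assumption.
  - apply meas_and; auto using meas_compl.
  - tauto.
Qed.

Lemma Pr_le1 (A : Om -> Prop) : meas Om A -> Pr Om A <= 1.
Proof.
  intros HA. rewrite <- (Pr_full Om).
  rewrite <- (Pr_and_add_and_not _ _ (meas_full Om) HA).
  rewrite (Pr_ext (fun w => True /\ A w) A) by tauto.
  assert (0 <= Pr Om (fun w => True /\ ~ A w)); [|lra].
  apply Pr_nonneg, meas_and; auto using meas_full, meas_compl.
Qed.

End ProbabilityBasics.

Definition prodl (f : nat -> R) (L : list nat) : R := fold_right Rmult 1 (map f L).

Lemma prodl_seq_S (f : nat -> R) m : prodl f (seq 0 (S m)) = prodl f (seq 0 m) * f m.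
Proof.
  unfold prodl. rewrite seq_S, map_app, fold_right_app; simpl.
  induction (map f (seq 0 m)) as [|x L IH]; simpl; [|rewrite IH]; ring.
Qed.

Lemma prodl_ge1 (f : nat -> R) L : (forall i, In i L -> 1 <= f i) -> 1 <= prodl f L.
Proof.
  induction L as [|i L IH]; intros H; [unfold prodl; simpl; lra|].
  assert (1 <= f i) by (apply H; left; reflexivity).
  assert (1 <= prodl f L) by (apply IH; intros; apply H; right; assumption).
  change (1 <= f i * prodl f L); nra.
Qed.

Lemma prodl_nonneg (f : nat -> R) L : (forall i, In i L -> 0 <= f i) -> 0 <= prodl f L.
Proof.
  induction L as [|i L IH]; intros H; unfold prodl in *; simpl; [lra|].
  apply Rmult_le_pos; [apply H; left; reflexivity | apply IH; intros; apply H; right; assumption].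
Qed.

Lemma prodl_le_Rpower_sum (f a : nat -> R) b c L :
  (forall i, In i L -> 0 <= f i <= Rpower b (c * a i)) ->
  prodl f L <= Rpower b (c * fold_right Rplus 0 (map a L)).
Proof.
  induction L as [|i L IH]; intros H; unfold prodl in *; simpl.
  - unfold Rpower; rewrite !Rmult_0_r, Rmult_0_l, exp_0; lra.
  - rewrite Rmult_plus_distr_l, Rpower_plus.
    assert (Hi := H i (or_introl eq_refl)).
    assert (HL : forall j, In j L -> 0 <= f j <= Rpower b (c * a j)) by (intros j Hj; apply H; right; exact Hj).
    assert (0 <= prodl f L) by (apply prodl_nonneg; intros j Hj; apply HL, Hj).
    apply Rmult_le_compat; [apply Hi | assumption | apply Hi | apply IH, HL].
Qed.

Lemma count_idx_S m (p : nat -> bool) :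
  count_idx (S m) p = (count_idx m p + if p m then 1 else 0)%nat.
Proof.
  unfold count_idx. rewrite seq_S, filter_app, length_app. simpl. destruct (p m); reflexivity.
Qed.

Lemma Rle_dec_true x y : (if Rle_dec x y then true else false) = true <-> x <= y.
Proof. destruct (Rle_dec x y); split; congruence || tauto. Qed.

Lemma Rlt_dec_true x y : (if Rlt_dec x y then true else false) = true <-> x < y.
Proof. destruct (Rlt_dec x y); split; congruence || tauto. Qed.

Definition count_le (a : nat -> R) (n : nat) (v : R) : nat :=
  count_idx n (fun i => if Rle_dec (a i) v then true else false).

Definition count_lt (a : nat -> R) (n : nat) (v : R) : nat :=
  count_idx n (fun i => if Rlt_dec (a i) v then true else false).

Lemma count_idx_mono n (p p' : nat -> bool) :
  (forall i, (i < n)%nat -> p i = true -> p' i = true) ->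
  (count_idx n p <= count_idx n p')%nat.
Proof.
  unfold count_idx. intros H.
  assert (HL : forall i, In i (seq 0 n) -> p i = true -> p' i = true)
    by (intros i Hi; apply in_seq in Hi; apply H; lia).
  clear H; induction (seq 0 n) as [|a L IH]; simpl; [lia|].
  specialize (IH (fun i Hi => HL i (or_intror Hi))).
  specialize (HL a (or_introl eq_refl)).
  destruct (p a), (p' a); simpl; lia.
Qed.

Lemma count_idx_pos n (p : nat -> bool) i :
  (i < n)%nat -> p i = true -> (0 < count_idx n p)%nat.
Proof.
  intros Hi Hp. unfold count_idx.
  assert (Hin : In i (filter p (seq 0 n))) by (apply filter_In; split; [apply in_seq; lia | exact Hp]).
  destruct (filter p (seq 0 n)); [destruct Hin | simpl; lia].
Qed.

Lemma exists_min_in (a : nat -> R) L :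
  L <> nil -> exists i, In i L /\ forall j, In j L -> a i <= a j.
Proof.
  induction L as [|x L IH]; intros HL; [congruence|].
  destruct L as [|y L'].
  - exists x; split; [left; reflexivity | intros j [<-|[]]; lra].
  - destruct IH as [i [Hi Hmin]]; [discriminate|].
    destruct (Rle_dec (a x) (a i)).
    + exists x; split; [left; reflexivity|]. intros j [<-|Hj]; [lra | specialize (Hmin j Hj); lra].
    + exists i; split; [right; exact Hi|]. intros j [<-|Hj]; [lra | auto].
Qed.

Lemma exists_argmin (a : nat -> R) n (p : nat -> bool) :
  (0 < count_idx n p)%nat ->
  exists i, (i < n)%nat /\ p i = true /\ forall j, (j < n)%nat -> p j = true -> a i <= a j.
Proof.
  intros Hpos.
  destruct (exists_min_in a (filter p (seq 0 n))) as [i [Hi Hmin]].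
  { unfold count_idx in Hpos; intros E; rewrite E in Hpos; simpl in Hpos; lia. }
  apply filter_In in Hi; destruct Hi as [Hi Hpi]; apply in_seq in Hi.
  exists i; split; [lia|split; [exact Hpi|]].
  intros j Hj Hpj; apply Hmin, filter_In; split; [apply in_seq; lia | exact Hpj].
Qed.

Lemma exists_argmax (a : nat -> R) n (p : nat -> bool) :
  (0 < count_idx n p)%nat ->
  exists i, (i < n)%nat /\ p i = true /\ forall j, (j < n)%nat -> p j = true -> a j <= a i.
Proof.
  intros Hpos. destruct (exists_argmin (fun i => - a i) n p Hpos) as [i [Hi [Hpi Hmin]]].
  exists i; split; [exact Hi | split; [exact Hpi|]].
  intros j Hj Hpj; specialize (Hmin j Hj Hpj); lra.
Qed.

(* The k-th smallest value is the least [a i] having at least [k] values below or at it. *)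
Lemma kmin_le_iff (a : nat -> R) n k t :
  (1 <= k)%nat -> (exists v, is_kmin a n k v /\ v <= t) <-> (k <= count_le a n t)%nat.
Proof.
  intros Hk. split.
  - intros [v [[_ [_ Hv]] Hvt]]. eapply Nat.le_trans; [exact Hv|].
    apply count_idx_mono; intros i _; rewrite !Rle_dec_true; lra.
  - intros Ht.
    destruct (exists_argmax a n (fun i => if Rle_dec (a i) t then true else false))
      as [im [Him [Himt Hmax]]]; [unfold count_le in Ht; lia|].
    apply Rle_dec_true in Himt.
    assert (Hkim : (k <= count_le a n (a im))%nat).
    { eapply Nat.le_trans; [exact Ht|]. apply count_idx_mono; intros i Hi.
      rewrite !Rle_dec_true; intros; apply Hmax; [exact Hi | apply Rle_dec_true; assumption]. }
    destruct (exists_argmin a n (fun i => Nat.leb k (count_le a n (a i))))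
      as [iv [Hiv [Hkiv Hmin]]].
    { apply (count_idx_pos _ _ im Him), Nat.leb_le, Hkim. }
    apply Nat.leb_le in Hkiv.
    assert (Hivim : a iv <= a im) by (apply Hmin; [exact Him | apply Nat.leb_le, Hkim]).
    exists (a iv); split; [|lra].
    split; [exists iv; split; [exact Hiv | reflexivity]|]. split; [|exact Hkiv].
    fold (count_lt a n (a iv)).
    destruct (Nat.lt_ge_cases (count_lt a n (a iv)) k) as [|Hge]; [assumption|exfalso].
    destruct (exists_argmax a n (fun i => if Rlt_dec (a i) (a iv) then true else false))
      as [jm [Hjm [Hjmv Hmax']]]; [unfold count_lt in Hge; lia|].
    apply Rlt_dec_true in Hjmv.
    assert (Hkjm : (k <= count_le a n (a jm))%nat).
    { eapply Nat.le_trans; [exact Hge|]. apply count_idx_mono; intros i Hi.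
      rewrite Rle_dec_true; intros; apply Hmax'; assumption. }
    assert (a iv <= a jm) by (apply Hmin; [exact Hjm | apply Nat.leb_le, Hkjm]).
    lra.
Qed.

Section Chernoff.

Variables (Om : prob_space) (n : nat) (X : nat -> Om -> R) (t lam : R).
Hypothesis HX : forall i, (i < n)%nat -> random_variable Om (X i).
Hypothesis Hind : independent Om n X.

Let p i := cdf Om (X i) t.

Lemma p_bounds i : (i < n)%nat -> 0 <= p i <= 1.
Proof. intros Hi; unfold p, cdf; split; [apply Pr_nonneg | apply Pr_le1]; apply HX, Hi. Qed.

Definition cylinder (I J : list nat) (w : Om) : Prop :=
  (forall i, In i I -> X i w <= t) /\ (forall i, In i J -> ~ X i w <= t).

Definition indices_from (m : nat) (L : list nat) : Prop :=
  NoDup L /\ forall i, In i L -> (m <= i < n)%nat.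

Lemma indices_from_lt m L : indices_from m L -> forall i, In i L -> (i < n)%nat.
Proof. intros [_ HL] i Hi; specialize (HL i Hi); lia. Qed.

Lemma indices_from_0 m L : indices_from m L -> indices_from 0 L.
Proof. intros [HN HL]; split; [exact HN | intros i Hi; specialize (HL i Hi); lia]. Qed.

Lemma indices_from_cons m L : (m < n)%nat -> indices_from (S m) L -> indices_from m (m :: L).
Proof.
  intros Hm [HN HL]; split.
  - constructor; [intros Hin; specialize (HL m Hin); lia | exact HN].
  - intros i [<-|Hi]; [lia | specialize (HL i Hi); lia].
Qed.

Lemma indices_from_tail m j L : indices_from m (j :: L) -> indices_from m L.
Proof.
  intros [HN HL]; inversion HN; split; [assumption | intros i Hi; apply HL; right; exact Hi].
Qed.

Lemma indices_from_perm m L L' : Permutation L L' -> indices_from m L -> indices_from m L'.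
Proof.
  intros Hperm [HN HL]; split; [exact (Permutation_NoDup Hperm HN)|].
  intros i Hi; apply HL, (Permutation_in _ (Permutation_sym Hperm)), Hi.
Qed.

Lemma meas_forall_in (P : nat -> Om -> Prop) (L : list nat) :
  (forall i, In i L -> meas Om (P i)) -> meas Om (fun w => forall i, In i L -> P i w).
Proof.
  induction L as [|a L IH]; intros H.
  - apply (meas_ext _ (fun _ => True)); [simpl; tauto | apply meas_full].
  - apply (meas_ext _ (fun w => P a w /\ forall i, In i L -> P i w)).
    + intros w; simpl; split; [intros [H1 H2] i [<-|Hi]; auto | auto].
    + apply meas_and; [apply H; left | apply IH; intros; apply H; right]; auto.
Qed.

Lemma meas_cylinder I J :
  (forall i, In i (I ++ J) -> (i < n)%nat) -> meas Om (cylinder I J).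
Proof.
  intros HI. apply meas_and; apply meas_forall_in; intros i Hi.
  - apply HX, HI, in_or_app; auto.
  - apply meas_compl, HX, HI, in_or_app; auto.
Qed.

Lemma Pr_cylinder_split I J j :
  (j < n)%nat -> (forall i, In i (I ++ J) -> (i < n)%nat) ->
  Pr Om (cylinder (j :: I) J) + Pr Om (cylinder I (j :: J)) = Pr Om (cylinder I J).
Proof.
  intros Hj HI.
  rewrite <- (Pr_and_add_and_not Om _ _ (meas_cylinder I J HI) (HX j Hj t)).
  f_equal; apply Pr_ext; intros w; unfold cylinder; simpl; split.
  - intros [H1 H2]; auto.
  - intros [[H1 H2] H3]; split; [intros i [<-|Hi]|]; auto.
  - intros [H1 H2]; auto.
  - intros [[H1 H2] H3]; split; [|intros i [<-|Hi]]; auto.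
Qed.

(* Independence gives the case [J = nil]; each constraint of [J] is peeled off by [Pr_cylinder_split]. *)
Lemma Pr_cylinder I J :
  indices_from 0 (I ++ J) -> Pr Om (cylinder I J) = prodl p I * prodl (fun i => 1 - p i) J.
Proof.
  revert I; induction J as [|j J IH]; intros I [HN HI].
  - rewrite app_nil_r in HN, HI. unfold prodl, p, cdf; simpl; rewrite Rmult_1_r.
    rewrite <- (Hind I (fun _ => t) HN (fun i Hi => proj2 (HI i Hi))).
    apply Pr_ext; unfold cylinder; simpl; tauto.
  - assert (HjI : indices_from 0 ((j :: I) ++ J))
      by (apply (indices_from_perm 0 (I ++ j :: J));
          [apply Permutation_sym, Permutation_middle | split; assumption]).
    assert (HI' : indices_from 0 (I ++ J)) by exact (indices_from_tail _ _ _ HjI).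
    assert (Hsplit := Pr_cylinder_split I J j (indices_from_lt 0 _ HjI j (or_introl eq_refl))
                                       (indices_from_lt 0 _ HI')).
    rewrite (IH (j :: I) HjI), (IH I HI') in Hsplit.
    unfold prodl in *; simpl in *; lra.
Qed.

Lemma Pr_cylinder_cons I J j :
  indices_from 0 (j :: I ++ J) -> Pr Om (cylinder (j :: I) J) = p j * Pr Om (cylinder I J).
Proof.
  intros HjI.
  rewrite (Pr_cylinder (j :: I) J HjI), (Pr_cylinder I J (indices_from_tail _ _ _ HjI)).
  unfold prodl; simpl; ring.
Qed.

Definition hits (m : nat) (w : Om) : nat := count_le (fun i => X i w) m t.

Lemma hits_S m w : hits (S m) w = (hits m w + if Rle_dec (X m w) t then 1 else 0)%nat.
Proof. unfold hits, count_le; rewrite count_idx_S; destruct (Rle_dec (X m w) t); reflexivity. Qed.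

Lemma meas_hits_ge m j : (m <= n)%nat -> meas Om (fun w => (j <= hits m w)%nat).
Proof.
  revert j; induction m as [|m IH]; intros j Hm.
  - destruct j.
    + apply (meas_ext _ (fun _ => True)); [intros; split; auto; lia | apply meas_full].
    + apply (meas_ext _ (fun _ => False)); [intros; split; [tauto | cbn; lia] | apply meas_empty].
  - apply (meas_ext _ (fun w => (X m w <= t /\ (j - 1 <= hits m w)%nat) \/
                                (~ X m w <= t /\ (j <= hits m w)%nat))).
    + intros w; rewrite hits_S.
      destruct (Rle_dec (X m w) t) as [Hle|Hgt]; split.
      * intros [[_ H]|[H _]]; [lia | tauto].
      * intros H; left; split; [assumption | lia].
      * intros [[H _]|[_ H]]; [tauto | lia].
      * intros H; right; split; [assumption | lia].
    + apply meas_or; apply meas_and; try apply meas_compl; try apply HX; try lia; apply IH; lia.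
Qed.

Lemma cylinder_hits_S I J m j w :
  cylinder I J w /\ (S j <= hits (S m) w)%nat <->
  (cylinder (m :: I) J w /\ (j <= hits m w)%nat) \/
  (cylinder I (m :: J) w /\ (S j <= hits m w)%nat).
Proof.
  unfold cylinder; rewrite hits_S; simpl.
  destruct (Rle_dec (X m w) t) as [Hle|Hgt]; split.
  - intros [[H1 H2] H3]; left; split; [split; [intros i [<-|Hi]|]|]; auto; lia.
  - intros [[[H1 H2] H3]|[[H1 H2] H3]]; [split; [split|]; auto; lia|].
    exfalso; apply (H2 m); auto.
  - intros [[H1 H2] H3]; right; split; [split; [|intros i [<-|Hi]]|]; auto; lia.
  - intros [[[H1 H2] H3]|[[H1 H2] H3]]; [exfalso; apply Hgt, H1; auto|].
    split; [split|]; auto; lia.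
Qed.

Hypothesis Hlam : 1 <= lam.

Let factor i := 1 - p i + lam * p i.

Lemma prodl_factor_ge1 m : (m <= n)%nat -> 1 <= prodl factor (seq 0 m).
Proof.
  intros Hm; apply prodl_ge1; intros i Hi; apply in_seq in Hi.
  assert (Hp := p_bounds i ltac:(lia)); unfold factor; nra.
Qed.

(* Markov's inequality for [lam ^ hits m] on a cylinder over the indices [>= m]; the induction
   step splits on whether [X m <= t]. *)
Lemma Pr_cylinder_hits_ge m j I J :
  (m <= n)%nat -> indices_from m (I ++ J) ->
  Pr Om (fun w => cylinder I J w /\ (j <= hits m w)%nat) <=
  Pr Om (cylinder I J) * prodl factor (seq 0 m) / lam ^ j.
Proof.
  revert j I J; induction m as [|m IH]; intros [|j] I J Hm HIJ;
    assert (HP : 0 <= Pr Om (cylinder I J)) by apply Pr_nonneg, meas_cylinder, (indices_from_lt _ _ HIJ).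
  1, 3: rewrite (Pr_ext Om _ (cylinder I J)) by (intros; split; [tauto | split; auto; lia]);
    assert (Hprod := prodl_factor_ge1 _ Hm); rewrite pow_O, Rdiv_1_r; nra.
  - rewrite (Pr_ext Om _ (fun _ => False)) by (intros; split; [cbn; lia | tauto]).
    rewrite Pr_empty. unfold prodl; simpl. apply Rmult_le_pos; [lra|].
    apply Rlt_le, Rinv_0_lt_compat, Rmult_lt_0_compat; [|apply pow_lt]; lra.
  - assert (HmIJ := indices_from_cons m _ ltac:(lia) HIJ).
    assert (HImJ := indices_from_perm _ _ _ (Permutation_middle I J m) HmIJ).
    rewrite (Pr_ext Om _ _ (fun w => cylinder_hits_S I J m j w)).
    rewrite Pr_or_disjoint.
    2: apply meas_and; [apply meas_cylinder, (indices_from_lt _ _ HmIJ) | apply meas_hits_ge; lia].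
    2: apply meas_and; [apply meas_cylinder, (indices_from_lt _ _ HImJ) | apply meas_hits_ge; lia].
    2: intros w [[H1 _] _] [[_ H2] _]; apply (H2 m); [left | apply H1; left]; reflexivity.
    assert (E1 := IH j (m :: I) J ltac:(lia) HmIJ).
    assert (E2 := IH (S j) I (m :: J) ltac:(lia) HImJ).
    assert (Hsplit := Pr_cylinder_split I J m ltac:(lia) (indices_from_lt _ _ HIJ)).
    rewrite (Pr_cylinder_cons I J m (indices_from_0 _ _ HmIJ)) in E1, Hsplit.
    replace (Pr Om (cylinder I (m :: J))) with ((1 - p m) * Pr Om (cylinder I J)) in E2 by lra.
    assert (0 < lam ^ j) by (apply pow_lt; lra).
    rewrite prodl_seq_S.
    replace (Pr Om (cylinder I J) * (prodl factor (seq 0 m) * factor m) / lam ^ S j)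
      with (p m * Pr Om (cylinder I J) * prodl factor (seq 0 m) / lam ^ j +
            (1 - p m) * Pr Om (cylinder I J) * prodl factor (seq 0 m) / lam ^ S j)
      by (unfold factor; simpl; field; lra).
    lra.
Qed.

Lemma Pr_hits_ge j :
  Pr Om (fun w => (j <= hits n w)%nat) <= prodl factor (seq 0 n) / lam ^ j.
Proof.
  assert (Hall : forall w, cylinder nil nil w) by (intros w; split; intros i []).
  assert (Hnil : indices_from n (nil ++ nil)) by (split; [constructor | intros i []]).
  assert (Hbound := Pr_cylinder_hits_ge n j nil nil (le_n n) Hnil).
  rewrite (Pr_ext Om _ (fun w => (j <= hits n w)%nat)) in Hbound by (intros w; specialize (Hall w); tauto).
  rewrite (Pr_ext Om (cylinder nil nil) (fun _ => True)) in Hbound by (intros w; specialize (Hall w); tauto).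
  rewrite Pr_full in Hbound.
  lra.
Qed.

End Chernoff.

Definition odds (x : R) : R := x / (1 - x).

Lemma exp_convex a x : 0 <= a <= 1 -> exp (a * x) <= 1 - a + a * exp x.
Proof.
  intros Ha.
  set (E := exp (a * x)).
  assert (HE : exp (- (a * x)) * E = 1) by (unfold E; rewrite <- exp_plus, Rplus_opp_l; apply exp_0).
  assert (Hx : exp x = E * exp (x - a * x)) by (unfold E; rewrite <- exp_plus; f_equal; ring).
  (* tangent-line bounds at [a * x], averaged with weights [1 - a] and [a] *)
  assert (H0 : E * (1 - a * x) <= 1).
  { rewrite <- HE, Rmult_comm. apply Rmult_le_compat_r; [apply Rlt_le, exp_pos|].
    pose proof (exp_ineq1_le (- (a * x))); lra. }
  assert (H1 : E * (1 + (x - a * x)) <= exp x).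
  { rewrite Hx. apply Rmult_le_compat_l; [apply Rlt_le, exp_pos | apply exp_ineq1_le]. }
  replace E with ((1 - a) * (E * (1 - a * x)) + a * (E * (1 + (x - a * x)))) by ring.
  nra.
Qed.

Lemma factor_le_exp p a L :
  0 <= p <= 1 -> 0 <= a <= 1 -> 0 <= L ->
  a = 1 \/ (p <> 1 /\ odds a >= exp L * odds p) ->
  1 - p + exp L * p <= exp (a * L).
Proof.
  intros Hp Ha HL Hodds.
  assert (Hlam : 1 <= exp L) by (rewrite <- exp_0; destruct HL as [HL|<-]; [left; apply exp_increasing|]; lra).
  destruct (Req_dec a 1) as [->|Ha1]; [rewrite Rmult_1_l; nra|].
  destruct Hodds as [|[Hp1 Hodds]]; [contradiction|].
  unfold odds in Hodds.
  assert (Hcross : exp L * p * (1 - a) <= a * (1 - p)).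
  { apply Rge_le in Hodds.
    apply (Rmult_le_compat_r ((1 - a) * (1 - p))) in Hodds; [|nra].
    replace (a / (1 - a) * ((1 - a) * (1 - p))) with (a * (1 - p)) in Hodds by (field; lra).
    replace (exp L * (p / (1 - p)) * ((1 - a) * (1 - p))) with (exp L * p * (1 - a)) in Hodds
      by (field; lra).
    exact Hodds. }
  set (c := exp (- L)).
  assert (Hc : exp L * c = 1) by (unfold c; rewrite <- exp_plus, Rplus_opp_r; apply exp_0).
  assert (Hc0 : 0 < c) by apply exp_pos.
  assert (Hconv : exp (a * - L) <= 1 - a + a * c) by (apply exp_convex; exact Ha).
  assert (Hprod : (1 - p + exp L * p) * (1 - a + a * c) <= 1).
  { assert (p * (1 - a) * (exp L * c) <= a * (1 - p) * c) by nra. nra. }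
  assert (Hinv : exp (a * L) * exp (a * - L) = 1)
    by (rewrite <- exp_plus; replace (a * L + a * - L) with 0 by ring; apply exp_0).
  assert (0 < exp (a * - L)) by apply exp_pos.
  assert (0 < exp (a * L)) by apply exp_pos.
  nra.
Qed.

Lemma condC_iter (F : R -> R) K : 0 < K -> condC F K ->
  forall j t, 0 < t ->
  F (K ^ j * t) = 1 \/ (F t <> 1 /\ odds (F (K ^ j * t)) >= 2 ^ j * odds (F t)).
Proof.
  intros HK HC. induction j as [|j IH]; intros t Ht.
  - simpl; rewrite Rmult_1_l. destruct (Req_dec (F t) 1); [left | right; split]; auto; lra.
  - assert (Ht' : 0 < K ^ j * t) by (apply Rmult_lt_0_compat; [apply pow_lt|]; assumption).
    simpl pow; rewrite Rmult_assoc.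
    destruct (HC _ Ht') as [H|[H1 H2]]; [left; exact H|].
    destruct (IH t Ht) as [H3|[H3 H4]]; [contradiction|].
    right; split; [exact H3|]. unfold odds in *.
    replace (2 * F (K ^ j * t) / (1 - F (K ^ j * t))) with (2 * (F (K ^ j * t) / (1 - F (K ^ j * t)))) in H2
      by (unfold Rdiv; ring).
    lra.
Qed.

Lemma condC_factor_le (F : R -> R) K l t :
  1 < K -> condC F K -> (forall x, 0 <= F x <= 1) -> 0 < t ->
  1 - F t + Rpower 2 (INR l) * F t <= Rpower 2 (INR l * F (K ^ l * t)).
Proof.
  intros HK HC HF Ht.
  assert (Hln2 : 0 < ln 2) by (rewrite <- ln_1; apply ln_increasing; lra).
  assert (H2l : exp (INR l * ln 2) = 2 ^ l) by (rewrite <- Rpower_pow by lra; reflexivity).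
  unfold Rpower; replace (INR l * F (K ^ l * t) * ln 2) with (F (K ^ l * t) * (INR l * ln 2)) by ring.
  apply factor_le_exp; auto.
  - apply Rmult_le_pos; [apply pos_INR | lra].
  - rewrite H2l; apply condC_iter; [lra | exact HC | exact Ht].
Qed.


Lemma Rpower_sum_div_pow_le (l k : nat) (s : R) :
  s <= INR k - 1 / 2 -> Rpower 2 (INR l * s) / Rpower 2 (INR l) ^ k <= / Rpower 2 (INR l / 2).
Proof.
  intros Hs.
  rewrite <- (Rpower_pow k (Rpower 2 (INR l))) by apply exp_pos.
  rewrite Rpower_mult, <- Rpower_Ropp.
  unfold Rdiv; rewrite <- Rpower_Ropp, <- Rpower_plus.
  apply Rle_Rpower; [lra|].
  assert (0 <= INR l) by apply pos_INR. nra.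
Qed.

Theorem mainTheorem2 (Om : prob_space) (K : R) (n k : nat)
  (X : nat -> Om -> R) (q : R) (l : nat) :
  1 < K ->
  (1 <= k)%nat -> (k <= n)%nat ->
  (forall i, (i < n)%nat -> random_variable Om (X i)) ->
  (forall i w, (i < n)%nat -> 0 <= X i w) ->
  independent Om n X ->
  (forall i, (i < n)%nat -> condC (cdf Om (X i)) K) ->
  0 < q ->
  rsum n (fun i => cdf Om (X i) q) <= INR k - 1 / 2 ->
  (5 <= l)%nat ->
  Pr Om (fun w => exists v, is_kmin (fun i => X i w) n k v /\ v <= q / K ^ l)
    <= 4 / Rpower 2 (INR l / 2).
Proof.
  intros HK Hk _ HX _ Hind HC Hq Hsum _.
  set (t := q / K ^ l).
  set (lam := Rpower 2 (INR l)).
  assert (Ht : 0 < t) by (apply Rdiv_lt_0_compat; [assumption | apply pow_lt; lra]).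
  assert (Hlam : 1 <= lam)
    by (rewrite <- (Rpower_O 2) by lra; apply Rle_Rpower; [lra | apply pos_INR]).
  assert (Hcdf : forall i, (i < n)%nat -> forall x, 0 <= cdf Om (X i) x <= 1)
    by (intros i Hi x; split; [apply Pr_nonneg | apply Pr_le1]; apply HX, Hi).
  assert (Hprod : prodl (fun i => 1 - cdf Om (X i) t + lam * cdf Om (X i) t) (seq 0 n)
                  <= Rpower 2 (INR l * rsum n (fun i => cdf Om (X i) q))).
  { apply prodl_le_Rpower_sum; intros i Hi; apply in_seq in Hi.
    split; [specialize (Hcdf i ltac:(lia) t); nra|].
    replace q with (K ^ l * t) by (unfold t; field; apply pow_nonzero; lra).
    apply condC_factor_le; [exact HK | apply HC; lia | apply Hcdf; lia | exact Ht]. }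
  rewrite (Pr_ext Om _ (fun w => (k <= hits Om X t n w)%nat)) by (intros w; apply kmin_le_iff, Hk).
  eapply Rle_trans; [apply (Pr_hits_ge Om n X t lam HX Hind Hlam)|].
  eapply Rle_trans; [apply Rmult_le_compat_r; [apply Rlt_le, Rinv_0_lt_compat, pow_lt; lra | exact Hprod]|].
  eapply Rle_trans; [apply Rpower_sum_div_pow_le, Hsum|].
  assert (0 < / Rpower 2 (INR l / 2)) by apply Rinv_0_lt_compat, exp_pos.
  unfold Rdiv; lra.
Qed.
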